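(* Let $S \subset \mathbb{R}^3$ be a path of length $1$ which is a segment of a (planar) logarithmic spiral starting at its center $0$ and ending at a point $u$. Then the distortion of $S$, namely $\sup_{v\neq w \in S} d_S(v,w)/|v-w|$ where $d_S(v,w)$ is the length of the subarc of $S$ between $v$ and $w$, equals $1/|u|$. Moreover, for every path $\alpha\subset\mathbb{R}^3$ of length $1$ whose diameter is at most $2|u|$, one has $\sup_{v\neq w\in\alpha} d_\alpha(v,w)/|v-w| \geq \frac{1}{2}\cdot\frac{1}{|u|}$.
   Context: A logarithmic spiral centered at $0$ is (up to rotation and scaling, inside a plane through $0$) the curve $\{0\}\cup\{e^{ks}(\cos s,\sin s): s\in\mathbb{R}\}$ for some $k>0$; a segment starting at the center is the closure of its part with $s\in(-\infty,s_1]$. $|\cdot|$ denotes the Euclidean norm. *)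

From Stdlib Require Import Reals Lra List Sorted.
Open Scope R_scope.

Definition R3 : Type := (R * R * R)%type.

Definition vadd (p q : R3) : R3 :=
  let '(x1, y1, z1) := p in let '(x2, y2, z2) := q in (x1 + x2, y1 + y2, z1 + z2).
Definition vscale (a : R) (p : R3) : R3 :=
  let '(x, y, z) := p in (a * x, a * y, a * z).
Definition vsub (p q : R3) : R3 := vadd p (vscale (-1) q).
Definition dot (p q : R3) : R :=
  let '(x1, y1, z1) := p in let '(x2, y2, z2) := q in x1 * x2 + y1 * y2 + z1 * z2.
Definition vzero : R3 := (0, 0, 0).

Definition norm (p : R3) : R := sqrt (dot p p).
Definition dist3 (p q : R3) : R := norm (vsub p q).

Definition continuous_on01 (g : R -> R3) : Prop :=
  forall x, 0 <= x <= 1 -> forall eps, eps > 0 ->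
    exists delta, delta > 0 /\
      forall y, 0 <= y <= 1 -> Rabs (y - x) < delta -> dist3 (g y) (g x) < eps.

Definition is_path (g : R -> R3) : Prop :=
  continuous_on01 g /\
  (forall s t, 0 <= s <= 1 -> 0 <= t <= 1 -> g s = g t -> s = t).

Fixpoint poly_len (g : R -> R3) (x : R) (l : list R) : R :=
  match l with
  | nil => 0
  | y :: l' => dist3 (g x) (g y) + poly_len g y l'
  end.

Definition inscribed_lengths (g : R -> R3) (a b : R) (r : R) : Prop :=
  exists l, Sorted Rle (a :: l) /\ last (a :: l) a = b /\ r = poly_len g a l.

Definition curve_length (g : R -> R3) (a b L : R) : Prop :=
  is_lub (inscribed_lengths g a b) L.

Definition distortion_ratios (g : R -> R3) (r : R) : Prop :=
  exists s t L : R, 0 <= s /\ s < t /\ t <= 1 /\ g s <> g t /\ curve_length g s t L /\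
    r = L / dist3 (g s) (g t).

(* Segment of a logarithmic spiral  {0} U { c e^{k s}(cos s e1 + sin s e2) : s <= s1 },
   parametrized over [0,1] by tau |-> point with spiral parameter s1 + ln(tau)/k
   (tau = 0 gives the center 0). *)
Definition spiral_point (k c : R) (e1 e2 : R3) (s : R) : R3 :=
  vscale (c * exp (k * s)) (vadd (vscale (cos s) e1) (vscale (sin s) e2)).

Definition spiral_path (k c : R) (e1 e2 : R3) (s1 : R) (tau : R) : R3 :=
  if Rle_dec tau 0 then vzero else spiral_point k c e1 e2 (s1 + ln tau / k).

Definition orthonormal (e1 e2 : R3) : Prop :=
  dot e1 e1 = 1 /\ dot e2 e2 = 1 /\ dot e1 e2 = 0.

(* Parametrized by tau in [0, 1] the spiral segment is self-similar: tau |-> lam * tau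
   acts on it as a similarity of ratio lam, so the arc over [0, t] has length t and
   the arc over [s, t] has length at most t - s.  By the law of cosines the chord
   between the parameters s <= t has length at least |u| (t - s), so the distortion
   is at most 1/|u|; it is attained by the chord from the center to u.  For any path
   of length 1, the ratio of the whole path to the chord between its endpoints is
   already at least 1/(2|u|). *)
From Stdlib Require Import Reals Lra List Sorted.
Open Scope R_scope.

Lemma last_cons_default {A : Type} (l : list A) (x d d' : A) :
  last (x :: l) d = last (x :: l) d'.
Proof. revert x; induction l as [|y l IH]; intros x; [reflexivity|apply IH]. Qed.

Lemma last_cons_app {A : Type} (l1 l2 : list A) (x d : A) :
  last (x :: l1 ++ l2) d = last (last (x :: l1) d :: l2) d.
Proof. revert x; induction l1 as [|y l1 IH]; intros x; [reflexivity|apply IH]. Qed.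

Lemma last_cons_map {A B : Type} (f : A -> B) (l : list A) (x d : A) :
  last (f x :: map f l) (f d) = f (last (x :: l) d).
Proof. revert x; induction l as [|y l IH]; intros x; [reflexivity|apply IH]. Qed.

Lemma Sorted_cons_app (l1 l2 : list R) (x : R) :
  Sorted Rle (x :: l1) -> Sorted Rle (last (x :: l1) x :: l2) ->
  Sorted Rle (x :: l1 ++ l2).
Proof.
  revert x; induction l1 as [|y l1 IH]; intros x H1 H2; [exact H2|].
  apply Sorted_inv in H1 as [Hs Hd]; apply HdRel_inv in Hd.
  constructor; [|constructor; exact Hd].
  apply IH; [exact Hs|]. rewrite (last_cons_default l1 y y x). exact H2.
Qed.

Lemma Sorted_map_Rle (f : R -> R) (l : list R) :
  (forall x y, x <= y -> f x <= f y) -> Sorted Rle l -> Sorted Rle (map f l).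
Proof.
  intros Hf H; induction H as [|a l _ IH Hd]; simpl; constructor; [exact IH|].
  destruct Hd; simpl; constructor; apply Hf; assumption.
Qed.

Lemma Sorted_cons_Forall_le (l : list R) (a : R) :
  Sorted Rle (a :: l) -> Forall (Rle a) l.
Proof.
  intros H; apply Sorted_StronglySorted in H; [|intros x y z; apply Rle_trans].
  now apply StronglySorted_inv in H.
Qed.

Lemma poly_len_app (g : R -> R3) (l1 l2 : list R) (x : R) :
  poly_len g x (l1 ++ l2) = poly_len g x l1 + poly_len g (last (x :: l1) x) l2.
Proof.
  revert x; induction l1 as [|y l1 IH]; intros x; cbn [app poly_len].
  - simpl; ring.
  - rewrite IH. change (last (x :: y :: l1) x) with (last (y :: l1) x).
    rewrite (last_cons_default l1 y y x). ring.
Qed.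

Lemma inscribed_lengths_concat {g : R -> R3} {a b c p q : R} :
  inscribed_lengths g a b p -> inscribed_lengths g b c q ->
  inscribed_lengths g a c (p + q).
Proof.
  intros [l1 [Hs1 [Hl1 ->]]] [l2 [Hs2 [Hl2 ->]]].
  exists (l1 ++ l2); split; [|split].
  - apply Sorted_cons_app; [exact Hs1|]. rewrite Hl1. exact Hs2.
  - rewrite last_cons_app, Hl1, (last_cons_default l2 b a b). exact Hl2.
  - rewrite poly_len_app, Hl1. reflexivity.
Qed.

Lemma curve_length_concat_le {g : R -> R3} {a b c Lab Lbc Lac : R} :
  curve_length g a b Lab -> curve_length g b c Lbc -> curve_length g a c Lac ->
  Lab + Lbc <= Lac.
Proof.
  intros Hab Hbc Hac.
  assert (Hq : forall q p, inscribed_lengths g a b q -> inscribed_lengths g b c p ->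
                           q <= Lac - p).
  { intros q p Hq Hp. pose proof (proj1 Hac _ (inscribed_lengths_concat Hq Hp)). lra. }
  assert (Hp : forall p, inscribed_lengths g b c p -> p <= Lac - Lab).
  { intros p HpI. enough (Lab <= Lac - p) by lra.
    apply (proj2 Hab); intros q Hq'. exact (Hq q p Hq' HpI). }
  enough (Lbc <= Lac - Lab) by lra.
  exact (proj2 Hbc _ Hp).
Qed.

Lemma dist3_vzero_l (p : R3) : dist3 vzero p = norm p.
Proof.
  destruct p as [[x y] z]; unfold dist3, norm, dot, vsub, vadd, vscale, vzero; cbn.
  f_equal; ring.
Qed.

Lemma norm_vzero : norm vzero = 0.
Proof. unfold norm, dot, vzero; rewrite Rmult_0_r, !Rplus_0_r; apply sqrt_0. Qed.

Lemma dist3_pos {p q : R3} : p <> q -> 0 < dist3 p q.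
Proof.
  intros Hne; destruct p as [[x1 y1] z1], q as [[x2 y2] z2].
  unfold dist3, norm, dot, vsub, vadd, vscale; cbn. apply sqrt_lt_R0.
  match goal with |- 0 < ?X => destruct (Rlt_le_dec 0 X) as [|Hle]; [assumption|] end.
  exfalso; apply Hne.
  pose proof (Rle_0_sqr (x1 + -1 * x2)); pose proof (Rle_0_sqr (y1 + -1 * y2));
  pose proof (Rle_0_sqr (z1 + -1 * z2)); unfold Rsqr in *.
  assert (Hx : Rsqr (x1 + -1 * x2) = 0) by (unfold Rsqr; lra).
  assert (Hy : Rsqr (y1 + -1 * y2) = 0) by (unfold Rsqr; lra).
  assert (Hz : Rsqr (z1 + -1 * z2) = 0) by (unfold Rsqr; lra).
  apply Rsqr_0_uniq in Hx, Hy, Hz. f_equal; [f_equal|]; lra.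
Qed.

Definition polar_dir (e1 e2 : R3) (a : R) : R3 :=
  vadd (vscale (cos a) e1) (vscale (sin a) e2).

Lemma polar_law_of_cosines (e1 e2 : R3) (A B a b : R) : orthonormal e1 e2 ->
  dot (vsub (vscale A (polar_dir e1 e2 a)) (vscale B (polar_dir e1 e2 b)))
      (vsub (vscale A (polar_dir e1 e2 a)) (vscale B (polar_dir e1 e2 b)))
  = A ^ 2 + B ^ 2 - 2 * A * B * cos (a - b).
Proof.
  destruct e1 as [[x1 y1] z1], e2 as [[x2 y2] z2]; intros [H11 [H22 H12]].
  unfold dot in H11, H22, H12; unfold polar_dir, dot, vsub, vadd, vscale; cbn.
  rewrite cos_minus.
  pose proof (sin2_cos2 a) as Ha; pose proof (sin2_cos2 b) as Hb; unfold Rsqr in Ha, Hb.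
  transitivity ((A * cos a - B * cos b) ^ 2 * (x1 * x1 + y1 * y1 + z1 * z1)
     + 2 * (A * cos a - B * cos b) * (A * sin a - B * sin b) * (x1 * x2 + y1 * y2 + z1 * z2)
     + (A * sin a - B * sin b) ^ 2 * (x2 * x2 + y2 * y2 + z2 * z2)); [ring|].
  rewrite H11, H22, H12.
  transitivity (A ^ 2 * (sin a * sin a + cos a * cos a) + B ^ 2 * (sin b * sin b + cos b * cos b)
     - 2 * A * B * (cos a * cos b + sin a * sin b)); [ring|].
  rewrite Ha, Hb. ring.
Qed.

Lemma spiral_path_0 (k c : R) (e1 e2 : R3) (s1 : R) : spiral_path k c e1 e2 s1 0 = vzero.
Proof. unfold spiral_path; destruct (Rle_dec 0 0); [reflexivity|lra]. Qed.

Section LogarithmicSpiral.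

Variables (k c : R) (e1 e2 : R3) (s1 : R).
Hypotheses (k_pos : k > 0) (c_pos : c > 0) (e_orth : orthonormal e1 e2).

Local Notation g := (spiral_path k c e1 e2 s1).
Local Notation r := (c * exp (k * s1)).

Lemma spiral_scale_pos : 0 < r.
Proof. apply Rmult_lt_0_compat; [lra|apply exp_pos]. Qed.

(* At tau = 0 both sides are [vzero], whatever the junk value [ln 0]. *)
Lemma spiral_path_polar (a : R) : 0 <= a ->
  g a = vscale (r * a) (polar_dir e1 e2 (s1 + ln a / k)).
Proof.
  intros Ha; unfold spiral_path; destruct (Rle_dec a 0).
  - replace a with 0 by lra; rewrite Rmult_0_r.
    destruct (polar_dir e1 e2 (s1 + ln 0 / k)) as [[x y] z]; unfold vscale, vzero.
    f_equal; [f_equal|]; ring.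
  - unfold spiral_point; f_equal.
    replace (k * (s1 + ln a / k)) with (k * s1 + ln a) by (field; lra).
    rewrite exp_plus, exp_ln by lra. ring.
Qed.

Lemma spiral_sqdist (a b : R) : 0 <= a -> 0 <= b ->
  dot (vsub (g a) (g b)) (vsub (g a) (g b))
  = r ^ 2 * (a ^ 2 + b ^ 2 - 2 * a * b * cos ((ln a - ln b) / k)).
Proof.
  intros Ha Hb; rewrite !spiral_path_polar, polar_law_of_cosines by assumption.
  replace (s1 + ln a / k - (s1 + ln b / k)) with ((ln a - ln b) / k) by (field; lra).
  ring.
Qed.

Lemma spiral_dist3_scale (lam a b : R) : 0 < lam -> 0 <= a -> 0 <= b ->
  dist3 (g (lam * a)) (g (lam * b)) = lam * dist3 (g a) (g b).
Proof.
  intros Hl Ha Hb; unfold dist3, norm.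
  rewrite !spiral_sqdist by (try apply Rmult_le_pos; lra).
  assert (Hcos : 2 * a * b * cos ((ln (lam * a) - ln (lam * b)) / k)
               = 2 * a * b * cos ((ln a - ln b) / k)).
  { destruct (Req_dec a 0) as [->|]; [ring|].
    destruct (Req_dec b 0) as [->|]; [ring|].
    rewrite !ln_mult by lra. do 3 f_equal. ring. }
  replace (r ^ 2 * ((lam * a) ^ 2 + (lam * b) ^ 2
                    - 2 * (lam * a) * (lam * b) * cos ((ln (lam * a) - ln (lam * b)) / k)))
    with (lam ^ 2 * (r ^ 2 * (a ^ 2 + b ^ 2 - 2 * a * b * cos ((ln a - ln b) / k))))
    by (rewrite <- Hcos; ring).
  rewrite sqrt_mult_alt, sqrt_pow2 by (try apply pow_le; lra). reflexivity.
Qed.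

Lemma spiral_dist3_ge (a b : R) : 0 <= a -> a <= b -> r * (b - a) <= dist3 (g a) (g b).
Proof.
  intros Ha Hab; unfold dist3, norm; rewrite spiral_sqdist by lra.
  pose proof spiral_scale_pos.
  rewrite <- (sqrt_pow2 (r * (b - a))) by (apply Rmult_le_pos; lra).
  apply sqrt_le_1_alt.
  pose proof (COS_bound ((ln a - ln b) / k)).
  assert (0 <= r ^ 2 * (a * b) * (1 - cos ((ln a - ln b) / k))) by
    (apply Rmult_le_pos; [apply Rmult_le_pos|]; nra).
  nra.
Qed.

Lemma norm_spiral_end : norm (g 1) = r.
Proof.
  rewrite <- dist3_vzero_l, <- (spiral_path_0 k c e1 e2 s1).
  unfold dist3, norm; rewrite spiral_sqdist by lra.
  replace (r ^ 2 * (0 ^ 2 + 1 ^ 2 - 2 * 0 * 1 * cos ((ln 0 - ln 1) / k))) with (r ^ 2) by ring.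
  apply sqrt_pow2, Rlt_le, spiral_scale_pos.
Qed.

Lemma poly_len_spiral_scale (lam a : R) (l : list R) : 0 < lam -> 0 <= a ->
  Forall (Rle 0) l -> poly_len g (lam * a) (map (Rmult lam) l) = lam * poly_len g a l.
Proof.
  intros Hl; revert a; induction l as [|y l IH]; intros a Ha Hf; simpl; [ring|].
  inversion Hf; subst. rewrite spiral_dist3_scale, IH by assumption. ring.
Qed.

Lemma inscribed_lengths_spiral_scale (lam b x : R) : 0 < lam ->
  inscribed_lengths g 0 b x -> inscribed_lengths g 0 (lam * b) (lam * x).
Proof.
  intros Hl [l [Hs [Hlast ->]]].
  exists (map (Rmult lam) l); split; [|split].
  - pose proof (Sorted_map_Rle (Rmult lam) (0 :: l)) as Hm; simpl in Hm.
    rewrite Rmult_0_r in Hm. apply Hm; [intros; apply Rmult_le_compat_l; lra|exact Hs].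
  - pose proof (last_cons_map (Rmult lam) l 0 0) as E; rewrite Rmult_0_r in E.
    rewrite E, Hlast. reflexivity.
  - rewrite <- (Rmult_0_r lam) at 2.
    symmetry; apply poly_len_spiral_scale; [lra|lra|].
    now apply Sorted_cons_Forall_le.
Qed.

Hypothesis length_one : curve_length g 0 1 1.

Lemma spiral_initial_arc_length (t : R) : 0 < t -> curve_length g 0 t t.
Proof.
  intros Ht; split.
  - intros x Hx.
    apply (inscribed_lengths_spiral_scale (/ t)) in Hx; [|apply Rinv_0_lt_compat; lra].
    rewrite Rinv_l in Hx by lra. apply (proj1 length_one) in Hx.
    apply Rmult_le_reg_l with (/ t); [apply Rinv_0_lt_compat; lra|].
    rewrite Rinv_l by lra. exact Hx.
  - intros B HB.
    enough (1 <= B / t) as H1.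
    { apply Rmult_le_reg_r with (/ t); [apply Rinv_0_lt_compat; lra|].
      rewrite Rinv_r by lra. exact H1. }
    apply (proj2 length_one); intros y Hy.
    apply (inscribed_lengths_spiral_scale t) in Hy; [|lra].
    rewrite Rmult_1_r in Hy. apply HB in Hy.
    apply Rmult_le_reg_l with t; [lra|]. unfold Rdiv.
    replace (t * (B * / t)) with B by (field; lra). exact Hy.
Qed.

Lemma spiral_arc_length_le (s t L : R) : 0 <= s -> s < t -> curve_length g s t L ->
  L <= t - s.
Proof.
  intros Hs Hst HL.
  destruct (Req_dec s 0) as [->|Hs0].
  - rewrite (is_lub_u _ _ _ HL (spiral_initial_arc_length t ltac:(lra))). lra.
  - pose proof (curve_length_concat_le (spiral_initial_arc_length s ltac:(lra)) HL
                  (spiral_initial_arc_length t ltac:(lra))). lra.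
Qed.

Lemma spiral_distortion_le (x : R) : distortion_ratios g x -> x <= 1 / r.
Proof.
  intros [s [t [L [Hs [Hst [_ [_ [HL ->]]]]]]]].
  pose proof (spiral_arc_length_le s t L Hs Hst HL) as HLe.
  pose proof (spiral_dist3_ge s t Hs (Rlt_le _ _ Hst)) as Hd.
  pose proof spiral_scale_pos as Hr.
  set (d := dist3 (g s) (g t)) in *.
  assert (Hd_pos : 0 < d) by (pose proof (Rmult_lt_0_compat r (t - s) Hr ltac:(lra)); lra).
  apply Rmult_le_reg_l with (r * d); [nra|].
  replace (r * d * (L / d)) with (r * L) by (field; lra).
  replace (r * d * (1 / r)) with d by (field; split; [apply Rgt_not_eq, exp_pos|lra]).
  nra.
Qed.

Lemma spiral_distortion_attained : distortion_ratios g (1 / r).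
Proof.
  assert (Hd : dist3 (g 0) (g 1) = r)
    by now rewrite spiral_path_0, dist3_vzero_l, norm_spiral_end.
  exists 0, 1, 1; split; [lra|split; [lra|split; [lra|split; [|split; [exact length_one|]]]]].
  - intros E. pose proof spiral_scale_pos.
    rewrite <- E, spiral_path_0, dist3_vzero_l, norm_vzero in Hd. lra.
  - now rewrite Hd.
Qed.

End LogarithmicSpiral.

Lemma distortion_ge_inv_diam {alpha : R -> R3} {delta D : R} :
  is_path alpha -> curve_length alpha 0 1 1 ->
  (forall s t, 0 <= s <= 1 -> 0 <= t <= 1 -> dist3 (alpha s) (alpha t) <= delta) ->
  is_upper_bound (distortion_ratios alpha) D -> 1 / delta <= D.
Proof.
  intros [_ Hinj] Hlen Hdiam HD.
  assert (Hne : alpha 0 <> alpha 1) by (intros E; apply Hinj in E; lra).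
  apply Rle_trans with (1 / dist3 (alpha 0) (alpha 1)).
  - pose proof (dist3_pos Hne). unfold Rdiv; rewrite !Rmult_1_l.
    apply Rinv_le_contravar; [assumption|]. apply Hdiam; lra.
  - apply HD. exists 0, 1, 1.
    split; [lra|split; [lra|split; [lra|split; [exact Hne|split; [exact Hlen|reflexivity]]]]].
Qed.

Theorem mainTheorem3 (k c : R) (e1 e2 : R3) (s1 : R) :
  k > 0 -> c > 0 -> orthonormal e1 e2 ->
  curve_length (spiral_path k c e1 e2 s1) 0 1 1 ->
  let u := spiral_path k c e1 e2 s1 1 in
  is_lub (distortion_ratios (spiral_path k c e1 e2 s1)) (1 / norm u) /\
  (forall alpha : R -> R3,
     is_path alpha ->
     curve_length alpha 0 1 1 ->
     (forall s t, 0 <= s <= 1 -> 0 <= t <= 1 ->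
        dist3 (alpha s) (alpha t) <= 2 * norm u) ->
     forall D, is_upper_bound (distortion_ratios alpha) D ->
       D >= (1 / 2) * (1 / norm u)).
Proof.
  intros Hk Hc Ho Hlen u; unfold u; rewrite norm_spiral_end by assumption.
  pose proof (spiral_scale_pos k c s1 Hc) as Hr.
  split; [split|].
  - intros x; apply spiral_distortion_le; assumption.
  - intros B HB; apply HB, spiral_distortion_attained; assumption.
  - intros alpha Hpath Hal Hdiam D HD.
    replace (1 / 2 * (1 / (c * exp (k * s1)))) with (1 / (2 * (c * exp (k * s1))))
      by (field; split; [apply Rgt_not_eq, exp_pos|lra]).
    apply Rle_ge, (distortion_ge_inv_diam Hpath Hal Hdiam HD).
Qed.
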